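(* $$1\le\liminf_{j\to+\infty}\frac{\log p^{(j)}_j}{j\log j}\le\limsup_{j\to+\infty}\frac{\log p^{(j)}_j}{j\log j}\le2.$$
   Context: Let $p_n$ denote the $n$-th prime number. Define $p^{(0)}_n=n$ and recursively $p^{(k+1)}_n=p_{p^{(k)}_n}$ for $k\in\mathbb N_0$. $\log$ is the natural logarithm. *)

From mathcomp Require Import all_boot all_order all_algebra.
From mathcomp Require Import all_classical all_reals all_analysis.
Set Implicit Arguments. Unset Strict Implicit. Unset Printing Implicit Defensive.
Import Order.TTheory GRing.Theory Num.Theory.

Lemma next_prime_ex (m : nat) : exists p, (m < p) && prime p.
Proof. by case: (prime_above m) => p mp pp; exists p; rewrite mp pp. Qed.

Definition next_prime (m : nat) : nat := ex_minn (next_prime_ex m).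

(* nth_prime n = p_n, the n-th prime, 1-indexed: p_1 = 2, p_2 = 3, ...
   nth_prime 0 = 1 is an unused sentinel. *)
Fixpoint nth_prime (n : nat) : nat :=
  if n is n'.+1 then next_prime (nth_prime n') else 1.

Fixpoint iter_prime (k n : nat) : nat :=
  if k is k'.+1 then nth_prime (iter_prime k' n) else n.

(* Upper bound: Chebyshev's estimate 2^m <= 'C(2m, m) <= (2m)^pi(2m) yields
   p_n <= 4n (log2 n + 2), hence p^(k)_j <= j (4j^2 + 8)^k for k <= j, and
   log p^(j)_j <= (2 + o(1)) j log j.
   Lower bound: the primorial bound prod_(p <= N) p <= 8^N, applied to the primes
   above sqrt N, gives pi(N) log N <= 8N, i.e. log p_n >= log n + log log n - log 8.
   So y_k = log p^(k)_j grows by at least log y_k - log 8 per step: after the first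
   a j steps y_k exceeds a j, and each of the remaining (1 - a) j steps adds at least
   log (a j) - log 8, whence log p^(j)_j >= (1 - a - o(1)) j log j. *)

From mathcomp Require Import all_boot all_order all_algebra.
From mathcomp Require Import all_classical all_reals all_analysis.
From mathcomp Require Import zify ring lra.
Import Order.TTheory GRing.Theory Num.Theory.
Set Implicit Arguments. Unset Strict Implicit. Unset Printing Implicit Defensive.

Lemma next_primeP m :
  [/\ m < next_prime m, prime (next_prime m) &
      forall q, m < q -> prime q -> next_prime m <= q].
Proof.
rewrite /next_prime; case: ex_minnP => p /andP[lt_mp p_pr] p_min.
by split=> // q lt_mq q_pr; apply: p_min; rewrite lt_mq q_pr.
Qed.

Lemma nth_prime_gt n : n < nth_prime n.
Proof.
elim: n => //= n IHn; have [lt_p _ _] := next_primeP (nth_prime n); lia.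
Qed.

Lemma prime_nth_prime n : 0 < n -> prime (nth_prime n).
Proof. by case: n => // n _; case: (next_primeP (nth_prime n)). Qed.

Lemma iter_prime_ge k n : n <= iter_prime k n.
Proof. by elim: k => //= k IHk; apply: leq_trans IHk (ltnW (nth_prime_gt _)). Qed.

Fixpoint prime_pi x := if x is x'.+1 then prime_pi x' + prime x else 0.

Lemma prime_piE x : prime_pi x = count prime (iota 0 x.+1).
Proof.
elim: x => // x IHx.
by rewrite [LHS]/= IHx -[x.+2]addn1 iotaD count_cat /= !addn0 add0n.
Qed.

Lemma prime_pi_leq x : prime_pi x <= x.
Proof. by elim: x => //= x IHx; case: (prime x.+1) => /=; lia. Qed.

Lemma leq_prime_pi : {homo prime_pi : x y / x <= y}.
Proof.
move=> x y /subnKC <-; elim: (y - x) => [|d IHd]; rewrite ?addn0 // addnS /=; lia.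
Qed.

Lemma prime_pi_pred p : prime p -> (prime_pi p.-1).+1 = prime_pi p.
Proof. by case: p => // p p_pr; rewrite /= p_pr addn1. Qed.

Lemma prime_pi_gap a d :
  (forall q, a < q <= a + d -> ~~ prime q) -> prime_pi (a + d) = prime_pi a.
Proof.
elim: d => [|d IHd] no_pr; first by rewrite addn0.
rewrite addnS /= IHd => [|q le_q]; last by apply: no_pr; lia.
by rewrite (negbTE (no_pr _ _)) ?addn0 //; lia.
Qed.

Lemma prime_pi_next_prime m : prime_pi (next_prime m) = (prime_pi m).+1.
Proof.
have [lt_mp p_pr p_min] := next_primeP m.
rewrite -(prime_pi_pred p_pr) -(subnKC (_ : m <= (next_prime m).-1)); last by lia.
rewrite prime_pi_gap // => q /andP[lt_mq le_q]; apply/negP => q_pr.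
by have := p_min q lt_mq q_pr; lia.
Qed.

Lemma prime_pi_nth_prime n : prime_pi (nth_prime n) = n.
Proof. by elim: n => //= n IHn; rewrite prime_pi_next_prime IHn. Qed.

Lemma nth_prime_leq n x : 0 < n -> n <= prime_pi x -> nth_prime n <= x.
Proof.
move=> n_gt0 le_n_pi; rewrite leqNgt; apply/negP => lt_x_p.
have := prime_pi_pred (prime_nth_prime n_gt0); rewrite prime_pi_nth_prime.
by have := @leq_prime_pi x (nth_prime n).-1 ltac:(lia); lia.
Qed.

Fixpoint prime_prod a k :=
  if k is k'.+1 then prime_prod a k' * (if prime (a + k) then a + k else 1) else 1.

Definition primorial n := prime_prod 0 n.

Lemma prime_prodD a b k :
  prime_prod a (b + k) = prime_prod a b * prime_prod (a + b) k.
Proof.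
elim: k => [|k IHk]; first by rewrite addn0 muln1.
by rewrite addnS /= IHk -mulnA !addnS addnA.
Qed.

Lemma prime_prod_gt0 a k : 0 < prime_prod a k.
Proof.
elim: k => //= k IHk; rewrite muln_gt0 IHk /=.
by case: ifP => // _; rewrite addn_gt0 orbT.
Qed.

Lemma prime_prod_geq a k : a.+1 ^ (prime_pi (a + k) - prime_pi a) <= prime_prod a k.
Proof.
elim: k => [|k IHk]; first by rewrite addn0 subnn.
rewrite addnS /= -addnS; have := leq_prime_pi (leq_addr k a).
case: (prime (a + k.+1)) => /= le_pi; last by rewrite addn0 muln1.
rewrite (_ : _ + 1 - _ = (prime_pi (a + k) - prime_pi a).+1); last by lia.
by rewrite expnS mulnC leq_mul // addnS ltnS leq_addr.
Qed.

Lemma prime_dvd_fact p n : prime p -> (p %| n`!) = (p <= n).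
Proof.
move=> p_pr; apply/idP/idP => [|le_pn]; last by rewrite dvdn_fact ?prime_gt0.
elim: n => [|n IHn]; first by rewrite dvdn1 => /eqP p1; rewrite p1 in p_pr.
by rewrite factS Euclid_dvdM // => /orP[/dvdn_leq -> // | /IHn]; lia.
Qed.

Lemma coprime_prime_prod_fact a k : coprime (prime_prod a k) a`!.
Proof.
elim: k => [|k IHk] /=; first exact: coprime1n.
rewrite coprimeMl IHk; case: ifP => [p_pr|_]; last exact: coprime1n.
by rewrite prime_coprime // prime_dvd_fact //; lia.
Qed.

Lemma prime_prod_dvd_fact a k : prime_prod a k %| (a + k)`!.
Proof.
elim: k => [|k IHk] /=; first exact: dvd1n.
by rewrite addnS factS mulnC dvdn_mul //; case: ifP.
Qed.

Lemma prime_prod_dvd_bin a k : k <= a -> prime_prod a k %| 'C(a + k, k).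
Proof.
move=> le_ka; have cop_a := coprime_prime_prod_fact a k.
have cop_k : coprime (prime_prod a k) k`!.
  by apply: coprime_dvdr cop_a; rewrite (fact_split le_ka) dvdn_mulr.
rewrite -(@Gauss_dvdl _ _ (k`! * (a + k - k)`!)); last by rewrite addnK coprimeMr cop_k.
by rewrite bin_fact ?leq_addl // prime_prod_dvd_fact.
Qed.

Lemma bin_leq_exp2 n k : 'C(n, k) <= 2 ^ n.
Proof.
elim: n k => [|n IHn] [|k] //=; first by rewrite expn_gt0.
by rewrite binS expnS mul2n -addnn leq_add.
Qed.

Lemma primorial_odd_leq m : primorial m.*2.+1 <= primorial m.+1 * 2 ^ m.*2.+1.
Proof.
rewrite /primorial (_ : m.*2.+1 = m.+1 + m); last by lia.
rewrite prime_prodD leq_mul2l; apply/orP; right.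
apply: leq_trans (bin_leq_exp2 _ m); apply: dvdn_leq; first by rewrite bin_gt0 leq_addl.
exact: prime_prod_dvd_bin.
Qed.

Lemma primorial_leq n : primorial n <= 8 ^ n.
Proof.
elim/ltn_ind: n => -[|n] IHn //.
have [n1_pr | n1_npr] := boolP (prime n.+1); last first.
  rewrite /primorial /= (negbTE n1_npr) muln1.
  by apply: leq_trans (IHn n _) _; rewrite ?leq_exp2l.
case: (even_prime n1_pr) => [-> // | n1_odd].
have n_eq : n.+1 = (n./2).*2.+1.
  by have := odd_double_half n.+1; rewrite n1_odd /=; lia.
have n_gt1 := prime_gt1 n1_pr.
rewrite n_eq; apply: leq_trans (primorial_odd_leq _) _.
apply: leq_trans (leq_mul (IHn _ _) (leqnn _)) _; first by lia.
by rewrite (_ : 8 = 2 ^ 3) // -!expnM -expnD leq_exp2l //; lia.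
Qed.

Lemma exp2_leq_bin_mid m : 2 ^ m <= 'C(m.*2, m).
Proof.
elim: m => [|m IHm] //; rewrite doubleS !binS expnS mul2n -addnn.
by apply: leq_add; apply: leq_trans IHm _; [exact: leq_addl | exact: leq_bin2l].
Qed.

Lemma logn_fact_wide p n N : prime p -> n < N ->
  logn p n`! = \sum_(1 <= k < N) n %/ p ^ k.
Proof.
move=> p_pr lt_nN; rewrite logn_fact // [RHS](big_cat_nat _ (n := n.+1)) //=.
rewrite [X in _ = _ + X]big1_seq ?addn0 // => k /andP[_].
rewrite mem_iota => /andP[le_nk _]; apply: divn_small.
apply: leq_trans (ltn_expl _ (prime_gt1 p_pr)) _.
by rewrite leq_exp2l ?prime_gt1 // ltnW.
Qed.

Lemma divn_addnn_leq p m k : 1 < p ->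
  (m + m) %/ p ^ k <= m %/ p ^ k + m %/ p ^ k + (k <= trunc_log p (m + m)).
Proof.
move=> p_gt1; case: (leqP k) => [_|lt_tk]; first exact: leq_divDl.
rewrite divn_small //; apply: leq_trans (trunc_log_ltn _ p_gt1) _.
by rewrite leq_exp2l.
Qed.

Lemma sum_leq_indicator N t : \sum_(1 <= k < N.+1) (k <= t) = minn N t.
Proof.
elim: N => [|N IHN]; first by rewrite big_geq //; lia.
by rewrite big_nat_recr //= IHN; case: leqP => /=; lia.
Qed.

Lemma logn_bin_mid_leq p m : prime p -> logn p 'C(m.*2, m) <= trunc_log p m.*2.
Proof.
move=> p_pr; rewrite -addnn; set t := trunc_log p (m + m).
have fact_eq := bin_fact (leq_addr m m); rewrite addnK in fact_eq.
have := congr1 (logn p) fact_eq.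
rewrite !lognM ?muln_gt0 ?fact_gt0 ?bin_gt0 ?leq_addr //.
rewrite !(@logn_fact_wide p _ (m + m).+1) ?ltnS ?leq_addr //.
have : \sum_(1 <= k < (m + m).+1) (m + m) %/ p ^ k <=
       \sum_(1 <= k < (m + m).+1) (m %/ p ^ k + m %/ p ^ k + (k <= t)).
  by apply: leq_sum => k _; apply: divn_addnn_leq; apply: prime_gt1.
rewrite !big_split /= sum_leq_indicator; lia.
Qed.

Lemma pfactor_bin_mid_leq p m : prime p -> 0 < m -> p ^ logn p 'C(m.*2, m) <= m.*2.
Proof.
move=> p_pr m_gt0; apply: leq_trans (trunc_logP (prime_gt1 p_pr) _); last by lia.
by rewrite leq_exp2l ?prime_gt1 // logn_bin_mid_leq.
Qed.

Lemma bin_mid_leq m : 0 < m -> 'C(m.*2, m) <= m.*2 ^ prime_pi m.*2.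
Proof.
move=> m_gt0; have C_gt0 : 0 < 'C(m.*2, m) by rewrite bin_gt0 -addnn leq_addr.
rewrite {1}(prod_prime_decomp C_gt0) prime_decompE big_map big_seq /=.
apply: leq_trans (leq_prod (E2 := fun=> m.*2) _) _.
  by move=> p; rewrite mem_primes => /and3P[p_pr _ _]; apply: pfactor_bin_mid_leq.
rewrite -big_seq big_const_seq count_predT iter_muln_1 leq_pexp2l //; first by lia.
rewrite prime_piE -size_filter uniq_leq_size ?primes_uniq // => p p_C.
move: (p_C); rewrite mem_primes => /and3P[p_pr _ _].
rewrite mem_filter p_pr mem_iota /= ltnS.
apply: leq_trans (pfactor_bin_mid_leq p_pr m_gt0).
by rewrite -{1}(expn1 p) (leq_pexp2l (prime_gt0 p_pr)) // logn_gt0.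
Qed.

Lemma nth_prime_leq_log n : 0 < n -> nth_prime n <= 4 * n * (trunc_log 2 n + 2).
Proof.
(* m is chosen so that (2m)^n < 2^m <= 'C(2m, m) <= (2m)^pi(2m), forcing pi(2m) > n. *)
move=> n_gt0; set e := trunc_log 2 n; set m := (e.*2 + 4) * n.
have m_gt0 : 0 < m by rewrite muln_gt0 n_gt0 addn_gt0 orbT.
have lt_n_2e : n < 2 ^ e.+1 := trunc_log_ltn n (isT : 1 < 2).
have lt_e_2e : e.+1 < 2 ^ e.+1 := ltn_expl e.+1 (isT : 1 < 2).
have lt_2m : m.*2 < 2 ^ (e.*2 + 4).
  rewrite (_ : e.*2 + 4 = e.+1 + e.+1 + 2) ?expnD; last by lia.
  by move: lt_n_2e lt_e_2e; rewrite /m; nia.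
have lt_exp : m.*2 ^ n < 2 ^ m by rewrite {2}/m expnM ltn_exp2r.
apply: nth_prime_leq => //; rewrite (_ : 4 * n * (e + 2) = m.*2); last by lia.
rewrite leqNgt; apply/negP => /ltnW le_pi_n.
have := leq_trans (exp2_leq_bin_mid m) (bin_mid_leq m_gt0).
by rewrite leqNgt (leq_ltn_trans (leq_pexp2l _ le_pi_n) lt_exp) // double_gt0.
Qed.

Lemma quadratic_leq_exp2 j : 10 <= j -> 4 * j ^ 2 + 8 <= 2 ^ j.-1.
Proof.
move=> j_ge10; rewrite -(subnKC j_ge10) (_ : (10 + _).-1 = 9 + (j - 10)) //.
elim: (j - 10) => [|d IHd] //; rewrite !addnS [2 ^ _.+1]expnS -!mulnn.
by rewrite -mulnn in IHd; nia.
Qed.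

Lemma iter_prime_leq j k :
  10 <= j -> k <= j -> iter_prime k j <= j * (4 * j ^ 2 + 8) ^ k.
Proof.
move=> j_ge10; elim: k => [|k IHk] lt_kj; first by rewrite muln1.
have {}IHk := IHk (ltnW lt_kj); set x := iter_prime k j in IHk *.
have x_gt0 : 0 < x by apply: leq_trans (iter_prime_ge k j); lia.
have le_base : (4 * j ^ 2 + 8) ^ k <= (2 ^ j.-1) ^ k.
  by case: (k) => // k'; rewrite leq_exp2r // quadratic_leq_exp2.
have log_x : trunc_log 2 x <= j ^ 2.
  rewrite -[X in _ <= X](@trunc_expnK 2) // leq_trunc_log //.
  have le_j : j <= 2 ^ j := ltnW (ltn_expl j (isT : 1 < 2)).
  apply: leq_trans IHk (leq_trans (leq_mul le_j le_base) _).
  by rewrite -expnM -expnD leq_exp2l //; nia.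
rewrite /= -/x; apply: leq_trans (nth_prime_leq_log x_gt0) _.
have : 4 * x * (trunc_log 2 x + 2) <= x * (4 * j ^ 2 + 8).
  by rewrite [4 * x]mulnC -mulnA leq_mul2l; apply/orP; right; lia.
have := leq_mul IHk (leqnn (4 * j ^ 2 + 8)).
by rewrite [_ ^ k.+1]expnS; nia.
Qed.

Lemma exists_nat_sqrt N : exists K, K * K <= N < K.+1 * K.+1.
Proof.
elim: N => [|N [K /andP[le_KN lt_NK]]]; first by exists 0.
have [eq_NK | ne_NK] := eqVneq N.+1 (K.+1 * K.+1).
  by exists K.+1; rewrite -eq_NK leqnn /=; nia.
by exists K; rewrite ltn_neqAle ne_NK /=; lia.
Qed.

Lemma exp_prime_pi_leq N K : K <= N -> K.+1 ^ (prime_pi N - K) <= 8 ^ N.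
Proof.
move=> le_KN; apply: leq_trans (primorial_leq N).
rewrite /primorial -(subnKC le_KN) prime_prodD.
apply: leq_trans (leq_pmull _ (prime_prod_gt0 _ _)).
apply: leq_trans (prime_prod_geq _ _).
rewrite add0n; apply: leq_pexp2l => //; have := prime_pi_leq K; lia.
Qed.

Section RealBounds.
Variable R : realType.
Local Open Scope ring_scope.

Lemma ln_nat_ge0 n : 0 <= ln (n%:R : R).
Proof. by case: n => [|n]; [rewrite ln0 | rewrite ln_ge0 // ler1n]. Qed.

Lemma ler_ln_nat a b : (0 < a)%N -> (a <= b)%N -> ln (a%:R : R) <= ln b%:R.
Proof.
by move=> a_gt0 le_ab; rewrite ler_ln ?ler_nat // posrE ltr0n (leq_trans a_gt0).
Qed.

Lemma ln_natX a k : (0 < a)%N -> ln ((a ^ k)%:R : R) = k%:R * ln a%:R.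
Proof. by move=> a_gt0; rewrite natrX lnXn ?ltr0n // mulr_natl. Qed.

Lemma ln_natS_le n : ln (n.+1%:R : R) <= n%:R.
Proof. by rewrite -natr1 addrC le_ln1Dx // (lt_le_trans _ (ler0n R n)) ?ltrN10. Qed.

Lemma ln8_le3 : ln (8 : R) <= 3.
Proof. by rewrite (_ : 8 = (1 + 1) ^+ 3 :> R) ?lnXn ?ler_pMn2r ?le_ln1Dx //; lra. Qed.

Lemma prime_pi_ln_le N : (prime_pi N)%:R * ln (N%:R : R) <= 8 * N%:R.
Proof.
(* The primes in (K, N], K = floor (sqrt N), exceed K and multiply to at most 8^N. *)
have [K /andP[le_KK_N lt_N_KK]] := exists_nat_sqrt N.
have le_KN : (K <= N)%N by nia.
set pi := prime_pi N.
have ln_pow : (pi - K)%:R * ln (K.+1%:R : R) <= N%:R * ln 8.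
  have := ler_ln_nat (expn_gt0 K.+1 (pi - K)) (exp_prime_pi_leq le_KN).
  by rewrite !ln_natX.
have ln_N : ln (N%:R : R) <= 2 * ln K.+1%:R.
  have [-> | N_gt0] := posnP N; first by rewrite ln0 // mulr_ge0 // ln_nat_ge0.
  by have := ler_ln_nat N_gt0 (ltnW lt_N_KK); rewrite mulnn ln_natX.
have ln_K := ln_natS_le K.
have pi_split : (pi%:R : R) <= (pi - K)%:R + K%:R by rewrite -natrD ler_nat; lia.
have KK_N : (K%:R * K%:R : R) <= N%:R by rewrite -natrM ler_nat.
have := ler_wpM2l (ler0n R pi) ln_N.
have := ler_wpM2r (ln_nat_ge0 K.+1) pi_split.
have := ler_wpM2l (ler0n R K) ln_K.
have := ler_wpM2l (ler0n R N) ln8_le3.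
lra.
Qed.

Lemma ln_nth_prime_ge n : (2 <= n)%N ->
  ln (n%:R : R) + ln (ln n%:R) - ln 8 <= ln (nth_prime n)%:R.
Proof.
move=> n_ge2; set p := nth_prime n.
have lt_np : (n < p)%N := nth_prime_gt n.
have ln_n_gt0 : 0 < ln (n%:R : R) by rewrite ln_gt0 // ltr1n.
have le_ln : ln (n%:R : R) <= ln p%:R by apply: ler_ln_nat; lia.
have p_gt0 : (0 < p)%N by lia.
have ln_p_gt0 : 0 < ln (p%:R : R) by lra.
have : ln (n%:R * ln p%:R) <= ln (8 * p%:R : R).
  rewrite ler_ln ?posrE ?mulr_gt0 ?ltr0n //; try lia.
  by have := prime_pi_ln_le p; rewrite prime_pi_nth_prime.
rewrite !lnM ?posrE ?ltr0n //; try lia.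
have : ln (ln (n%:R : R)) <= ln (ln p%:R) by rewrite ler_ln ?posrE //; lra.
lra.
Qed.

Lemma ln_iter_prime_le j : (10 <= j)%N ->
  ln (iter_prime j j)%:R <= ln (j%:R : R) + j%:R * (ln 12 + 2 * ln j%:R).
Proof.
move=> j_ge10; have j_gt0 : (0 < j)%N by lia.
have A_gt0 : (0 < 4 * j ^ 2 + 8)%N by lia.
have x_gt0 := leq_trans j_gt0 (iter_prime_ge j j).
have := ler_ln_nat x_gt0 (iter_prime_leq j_ge10 (leqnn j)).
rewrite natrM lnM ?posrE ?ltr0n ?expn_gt0 ?A_gt0 // ln_natX // => /le_trans; apply.
have : (4 * j ^ 2 + 8 <= 12 * j ^ 2)%N by nia.
move=> /(ler_ln_nat A_gt0).
rewrite natrM lnM ?posrE ?ltr0n ?expn_gt0 ?j_gt0 // ln_natX //.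
by have := ler0n R j; nra.
Qed.
End RealBounds.

Section LogRecurrence.
Variables (R : realType) (y : nat -> R).
Local Open Scope ring_scope.
Hypothesis y_step : forall k, y k + ln (y k) - ln 8 <= y k.+1.
Hypothesis y0_ge : 8 * expR 1 <= y 0.

Lemma log_recurrence_ge_linear k : y 0 + k%:R <= y k.
Proof.
have c_gt0 : 0 < 8 * expR 1 :> R by rewrite mulr_gt0 ?expR_gt0.
elim: k => [|k IHk]; first by rewrite addr0.
have yk_ge : 8 * expR 1 <= y k by apply: le_trans y0_ge (le_trans _ IHk); rewrite lerDl.
have : ln (8 * expR 1) <= ln (y k) by rewrite ler_ln ?posrE // (lt_le_trans c_gt0).
rewrite lnM ?posrE ?expR_gt0 // expRK -[k.+1%:R]natr1.
by have := y_step k; lra.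
Qed.

Lemma log_recurrence_ge (s : R) k : 8 <= s -> (k%:R - s - 1) * (ln s - ln 8) <= y k.
Proof.
move=> s_ge8; set D := ln s - ln 8.
have D_ge0 : 0 <= D by rewrite subr_ge0 ler_ln ?posrE //; lra.
have y_ge0 k' : 0 <= y k'.
  apply: le_trans (log_recurrence_ge_linear k'); rewrite addr_ge0 //.
  by apply: le_trans y0_ge; rewrite mulr_ge0 ?expR_ge0.
elim: k => [|k IHk]; first by have := y_ge0 0; nra.
(* Once k > s, y k >= k > s, so each further step adds at least D. *)
rewrite -[k.+1%:R]natr1 (_ : _ * _ = (k%:R - s - 1) * D + D); last by ring.
have [lt_sk | le_ks] := ltrP s k%:R; last by have := y_ge0 k.+1; nra.
have : ln s <= ln (y k).
  by rewrite ler_ln ?posrE; have := log_recurrence_ge_linear k; have := y_ge0 0; lra.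
by have := y_step k; rewrite /D in IHk *; lra.
Qed.
End LogRecurrence.

Section Asymptotics.
Variable R : realType.
Local Open Scope classical_set_scope.
Local Open Scope ring_scope.

Lemma ln_iter_prime_ge j (s : R) : 8 <= s -> 8 * expR 1 <= ln (j%:R : R) ->
  (j%:R - s - 1) * (ln s - ln 8) <= ln (iter_prime j j)%:R.
Proof.
move=> s_ge8 ln_j_ge; have j_ge2 : (2 <= j)%N.
  rewrite leqNgt; apply/negP => j_lt2.
  have : ln (j%:R : R) <= 0 by rewrite ln_le0 // lern1 -ltnS.
  by have := expR_gt0 (1 : R); lra.
apply: (log_recurrence_ge (y := fun k => ln (iter_prime k j)%:R)) => // k.
by apply: ln_nth_prime_ge; apply: leq_trans (iter_prime_ge k j).
Qed.

Lemma ln_nat_near_ge (c : R) : \forall j \near \oo, c <= ln (j%:R : R).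
Proof.
apply: filterS (nbhs_infty_ger (expR c)) => j le_j.
by rewrite -ler_expR lnK // posrE (lt_le_trans (expR_gt0 c)).
Qed.

Lemma iter_prime_ratio_near_le (e : R) : 0 < e ->
  \forall j \near \oo, ln (iter_prime j j)%:R / (j%:R * ln j%:R) <= 2 + e.
Proof.
move=> e_gt0; near=> j.
have j_ge10 : (10 <= j)%N by near: j; exact: nbhs_infty_ge.
have le_j : 2 / e <= j%:R by near: j; exact: nbhs_infty_ger.
have le_L : 2 * ln 12 / e <= ln j%:R by near: j; exact: ln_nat_near_ge.
rewrite ler_pdivrMr // in le_j; rewrite ler_pdivrMr // in le_L.
have L_gt0 : 0 < ln (j%:R : R) by apply: ln_gt0; rewrite ltr1n; lia.
have := ln_iter_prime_le R j_ge10.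
rewrite ler_pdivrMr ?mulr_gt0 ?ltr0n //; last by lia.
have := ler_wpM2r (ltW L_gt0) le_j; have := ler_wpM2l (ler0n R j) le_L.
lra.
Unshelve. all: end_near.
Qed.

Lemma iter_prime_ratio_near_ge (e : R) : 0 < e ->
  \forall j \near \oo, 1 - e <= ln (iter_prime j j)%:R / (j%:R * ln j%:R).
Proof.
move=> e_gt0; set a := Num.min (e / 3) 1.
have a_gt0 : 0 < a by rewrite lt_min ltr01 divr_gt0.
have a_le1 : a <= 1 by rewrite ge_min lexx orbT.
have a_le : 3 * a <= e.
  by rewrite mulrC -ler_pdivlMr // ge_min lexx.
(* a <= 1 keeps b = ln (8 / a) nonnegative. *)
set b := ln 8 - ln a.
have b_ge0 : 0 <= b by rewrite subr_ge0 (le_trans (ln_le0 a_le1)) // ln_ge0 //; lra.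
near=> j.
have le_j : 8 / a <= j%:R by near: j; exact: nbhs_infty_ger.
have le_L : 8 * expR 1 <= ln (j%:R : R) by near: j; exact: ln_nat_near_ge.
have le_bL : b / a <= ln j%:R by near: j; exact: ln_nat_near_ge.
rewrite ler_pdivrMr // in le_j; rewrite ler_pdivrMr // in le_bL.
have L_gt0 : 0 < ln (j%:R : R) by apply: lt_le_trans le_L; rewrite mulr_gt0 ?expR_gt0.
have j_gt0 : 0 < j%:R :> R by rewrite ltr0n; near: j; exact: nbhs_infty_gt.
have := ln_iter_prime_ge le_j le_L.
rewrite lnM ?posrE // -/b ler_pdivlMr ?mulr_gt0 //.
have ja_ge1 : 1 <= j%:R * a by lra.
have := ler_wpM2r (ltW L_gt0) ja_ge1.
have := ler_wpM2l (ltW j_gt0) le_bL.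
have := mulr_ge0 (mulr_ge0 (ltW j_gt0) (ltW a_gt0)) b_ge0.
have := ler_wpM2r (mulr_ge0 (ltW j_gt0) (ltW L_gt0)) a_le.
rewrite /b; nra.
Unshelve. all: end_near.
Qed.
End Asymptotics.

Section LimnBounds.
Variable R : realType.
Local Open Scope classical_set_scope.
Local Open Scope ereal_scope.

Lemma limn_esup_le_near (u : (\bar R)^nat) (a : R) :
  (forall e : R, (0 < e)%R -> \forall j \near \oo, u j <= (a + e)%:E) ->
  limn_esup u <= a%:E.
Proof.
move=> u_le; apply/lee_addgt0Pr => e e_gt0.
rewrite limn_esup_lim; apply: lime_le; first exact: is_cvg_esups.
have [N _ le_uN] := u_le e e_gt0; exists N => // m /= le_Nm.
apply: ge_ereal_sup => _ [k /= le_mk <-].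
by rewrite -EFinD; apply: le_uN; apply: leq_trans le_Nm le_mk.
Qed.

Lemma limn_einf_ge_near (u : (\bar R)^nat) (a : R) :
  (forall e : R, (0 < e)%R -> \forall j \near \oo, (a - e)%:E <= u j) ->
  a%:E <= limn_einf u.
Proof.
move=> u_ge; apply/lee_subgt0Pr => e e_gt0.
rewrite limn_einf_lim; apply: lime_ge; first exact: is_cvg_einfs.
have [N _ le_uN] := u_ge e e_gt0; exists N => // m /= le_Nm.
apply: le_ereal_inf_tmp => _ [k /= le_mk <-].
by rewrite -EFinB; apply: le_uN; apply: leq_trans le_Nm le_mk.
Qed.
End LimnBounds.

Unset Implicit Arguments.
Local Open Scope ring_scope.
Local Open Scope ereal_scope.

Theorem corollary12 (R : realType) :
  let u := fun j : nat =>
    ((ln ((iter_prime j j)%:R : R)) / (j%:R * ln (j%:R : R)))%:E in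
  1%:E <= limn_einf u /\ limn_einf u <= limn_esup u /\ limn_esup u <= 2%:E.
Proof.
move=> u; split; [|split].
- apply: limn_einf_ge_near => e /iter_prime_ratio_near_ge.
  by apply: filterS => j; rewrite lee_fin.
- exact: limn_einf_sup.
- apply: limn_esup_le_near => e /iter_prime_ratio_near_le.
  by apply: filterS => j; rewrite lee_fin.
Qed.
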